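(* Let $G=(\mathcal V,E)$ be a simple, connected, undirected graph with vertex set $\mathcal V=\{1,\dots,N\}$ and nonnegative edge weights $w_{ij}=w_{ji}$ ($w_{ii}=0$), degree matrix $\mathbf D=\mathrm{diag}(d_1,\dots,d_N)$ with $d_i=\sum_j w_{ij}$, adjacency matrix $\mathbf W=(w_{ij})$, and symmetric normalized Laplacian $\boldsymbol{\mathcal L}=\mathbf D^{-1/2}(\mathbf D-\mathbf W)\mathbf D^{-1/2}$. Fix an orthonormal eigenbasis $\mathbf u_1,\dots,\mathbf u_N$ of $\boldsymbol{\mathcal L}$ with eigenvalues $0=\lambda_1\le\dots\le\lambda_N$, and let $\mathbf U$ be the matrix with columns $\mathbf u_i$. For a signal $\phi\in\mathbb R^N$, $\phi\neq 0$, let its bandwidth be $\omega(\phi)=\max\{\lambda_i : \langle \phi,\mathbf u_i\rangle\neq 0\}$. For a nonempty subset $\mathcal S\subseteq\mathcal V$, define the cut-off frequency $\omega_c(\mathcal S)=\inf\{\omega(\phi): \phi\in\mathbb R^N\setminus\{0\},\ \phi(i)=0\ \forall i\in\mathcal S\}$ (with $\inf\emptyset=+\infty$), and let $\mathcal K=\{i:\lambda_i<\omega_c(\mathcal S)\}$. For $\theta\in\mathbb R$, let $\mathcal P_\theta=\sum_{i:\lambda_i<\theta}\mathbf u_i\mathbf u_i^T$ be the orthogonal projection onto the span of eigenvectors with eigenvalue less than $\theta$. Let $\mathbf f\in\mathbb R^N$ and $\delta>0$, and define the smoothness $\gamma(\mathbf f)=\min\{\theta : \|\mathbf f-\mathcal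 P_\theta\mathbf f\|\le\delta\}$. Let $p$ be the number of eigenvalues $\lambda_i$ of $\boldsymbol{\mathcal L}$ with $\lambda_i<\gamma(\mathbf f)$. For a sampling set $\mathcal S$, let $\hat{\mathbf f}=\mathbf U_{\mathcal V,\mathcal K}\boldsymbol\alpha^*$ where $\boldsymbol\alpha^*=\arg\min_{\boldsymbol\alpha}\|\mathbf U_{\mathcal S,\mathcal K}\boldsymbol\alpha-\mathbf f(\mathcal S)\|$ (here $\mathbf U_{A,B}$ is the submatrix of $\mathbf U$ with rows in $A$ and columns in $B$, and $\mathbf f(\mathcal S)$ is the restriction of $\mathbf f$ to $\mathcal S$), the least-squares problem being required to have a unique solution. Then every sampling set $\mathcal S$ whose reconstruction satisfies $\|\mathbf f-\hat{\mathbf f}\|\le\delta$ has $|\mathcal S|\ge p$; i.e., the minimum number of labels $l$ needed to achieve $\|\mathbf f-\hat{\mathbf f}\|\le\delta$ satisfies $l\ge p$.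
   Context: A graph signal is a vector $\mathbf f\in\mathbb R^N$ indexed by the vertices; its Graph Fourier Transform is $\mathbf U^T\mathbf f$, and eigenvalues of $\boldsymbol{\mathcal L}$ play the role of frequencies. Sampling $\mathbf f$ on $\mathcal S$ (labeling the nodes in $\mathcal S$) means retaining $\mathbf f(\mathcal S)$, and $\hat{\mathbf f}$ is the bandlimited reconstruction of $\mathbf f$ from these samples using the eigenvectors with eigenvalue below the cut-off frequency of $\mathcal S$. *)

From mathcomp Require Import all_boot all_order all_algebra.
From mathcomp Require Import boolp classical_sets reals constructive_ereal ereal.
Set Implicit Arguments. Unset Strict Implicit. Unset Printing Implicit Defensive.
Import Order.TTheory GRing.Theory Num.Theory.
Local Open Scope ring_scope.
Local Open Scope classical_set_scope.

Section GSP.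
Variables (R : realType) (N : nat).

Definition vnorm m (v : 'cV[R]_m) : R := Num.sqrt (\sum_(a < m) v a 0 ^+ 2).

Definition adj_edge (W : 'M[R]_N) : rel 'I_N := fun i j => 0 < W i j.
Definition weighted_simple_connected (W : 'M[R]_N) : Prop :=
  [/\ forall i j, 0 <= W i j, W^T = W, forall i, W i i = 0
    & forall i j, connect (adj_edge W) i j].

Definition degree (W : 'M[R]_N) (i : 'I_N) : R := \sum_(j < N) W i j.
Definition degmx (W : 'M[R]_N) : 'M[R]_N := diag_mx (\row_i degree W i).
Definition degmx_invsqrt (W : 'M[R]_N) : 'M[R]_N :=
  diag_mx (\row_i (Num.sqrt (degree W i))^-1).
Definition normLap (W : 'M[R]_N) : 'M[R]_N :=
  degmx_invsqrt W *m (degmx W - W) *m degmx_invsqrt W.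

Definition ortho_eigenbasis (L U : 'M[R]_N) (lam : 'I_N -> R) : Prop :=
  [/\ U^T *m U = 1%:M, L *m U = U *m diag_mx (\row_i lam i)
    & forall i j : 'I_N, (i <= j)%N -> lam i <= lam j].

Definition gft (U : 'M[R]_N) (phi : 'cV[R]_N) (i : 'I_N) : R := (U^T *m phi) i 0.

Definition bandwidth (U : 'M[R]_N) (lam : 'I_N -> R) (phi : 'cV[R]_N) : \bar R :=
  \big[maxe/-oo%E]_(i | gft U phi i != 0) (lam i)%:E.

(* cut-off frequency of S (inf of the empty set is +oo) *)
Definition cutoff (U : 'M[R]_N) (lam : 'I_N -> R) (S : {set 'I_N}) : \bar R :=
  ereal_inf [set bandwidth U lam phi | phi in
     [set phi : 'cV[R]_N | phi != 0 /\ forall i, i \in S -> phi i 0 = 0]].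

Definition Kset (U : 'M[R]_N) (lam : 'I_N -> R) (S : {set 'I_N}) : {set 'I_N} :=
  [set i | ((lam i)%:E < cutoff U lam S)%E].

Definition proj_below (U : 'M[R]_N) (lam : 'I_N -> R) (theta : R) : 'M[R]_N :=
  \sum_(i < N | lam i < theta) (col i U *m (col i U)^T).

Definition smoothness (U : 'M[R]_N) (lam : 'I_N -> R) (delta : R) (f : 'cV[R]_N)
  : \bar R :=
  ereal_inf [set theta%:E | theta in
     [set theta : R | vnorm (f - proj_below U lam theta *m f) <= delta]].

Definition num_below (lam : 'I_N -> R) (g : \bar R) : nat :=
  #|[set i : 'I_N | ((lam i)%:E < g)%E]|.

(* submatrix U_{A,B}, rows/columns enumerated increasingly *)
Definition subU (U : 'M[R]_N) (A B : {set 'I_N}) : 'M[R]_(#|A|, #|B|) :=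
  \matrix_(a, b) U (enum_val a) (enum_val b).
Definition restr (f : 'cV[R]_N) (S : {set 'I_N}) : 'cV[R]_#|S| :=
  \col_a f (enum_val a) 0.

Definition unique_lsq m n (A : 'M[R]_(m, n)) (b : 'cV[R]_m) (alpha : 'cV[R]_n)
  : Prop :=
  (forall beta, vnorm (A *m alpha - b) <= vnorm (A *m beta - b)) /\
  (forall beta, (forall g, vnorm (A *m beta - b) <= vnorm (A *m g - b)) ->
     beta = alpha).

Definition colsubmx (U : 'M[R]_N) (B : {set 'I_N}) : 'M[R]_(N, #|B|) :=
  \matrix_(i, b) U i (enum_val b).

Definition reconstr (U : 'M[R]_N) (lam : 'I_N -> R) (S : {set 'I_N})
  (alpha : 'cV[R]_#|Kset U lam S|) : 'cV[R]_N :=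
  colsubmx U (Kset U lam S) *m alpha.

End GSP.
Arguments reconstr {R N} U lam S alpha.

From mathcomp Require Import all_boot all_order all_algebra.
From mathcomp Require Import reals.
From mathcomp Require classical_sets constructive_ereal ereal.
Import Order.TTheory GRing.Theory Num.Theory.
Local Open Scope ring_scope.

(* Two independent bounds give p <= |K| <= |S|.  Uniqueness of the
   least-squares solution makes U_{S,K} injective, so it has at least as many
   rows as columns.  For the other bound, K is a lower set of the spectrum:
   it is exactly {i | lam i < lam j} for the smallest eigenvalue lam j outside
   K, so P_{lam j} is the orthogonal projection onto the columns U_{V,K}.  The
   projection is the best approximation in that span, hence
   ||f - P_{lam j} f|| <= ||f - fhat|| <= delta, i.e. gamma(f) <= lam j and
   every eigenvalue below gamma(f) is indexed in K (trivially so if K is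
   everything). *)

Lemma mulmx_inj_leq (F : fieldType) m n (A : 'M[F]_(m, n)) :
  (forall v : 'cV[F]_n, A *m v = 0 -> v = 0) -> (n <= m)%N.
Proof.
move=> Ainj; have freeAT : row_free A^T.
  rewrite -kermx_eq0; apply/eqP/row_matrixP => i; rewrite row0.
  apply: trmx_inj; rewrite trmx0; apply: Ainj.
  by rewrite -[A in A *m _]trmxK -trmx_mul -row_mul mulmx_ker row0 trmx0.
by rewrite -(eqP freeAT) rank_leq_col.
Qed.

Section LeastSquares.
Set Implicit Arguments.
Variable R : realType.

Lemma vnormE m (v : 'cV[R]_m) : vnorm v = Num.sqrt ((v^T *m v) 0 0).
Proof.
by rewrite /vnorm mxE; congr Num.sqrt; apply: eq_bigr => a _; rewrite !mxE expr2.
Qed.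

Lemma mulmx_tr_self_ge0 m (v : 'cV[R]_m) : 0 <= (v^T *m v) 0 0.
Proof. by rewrite mxE; apply: sumr_ge0 => a _; rewrite !mxE -expr2 sqr_ge0. Qed.

Lemma vnorm_le_addr_orth m k (B : 'M[R]_(m, k)) (x : 'cV[R]_m) (z : 'cV[R]_k) :
  B^T *m x = 0 -> vnorm x <= vnorm (x + B *m z).
Proof.
move=> Bx0; rewrite !vnormE ler_sqrt ?mulmx_tr_self_ge0 //.
have xB0 : x^T *m B = 0 by rewrite -[B]trmxK -trmx_mul Bx0 trmx0.
rewrite (linearD (@trmx R _ _)) /= mulmxDl !mulmxDr mulmxA xB0 mul0mx addr0.
rewrite trmx_mul -[_ *m B^T *m x]mulmxA Bx0 mulmx0 add0r [X in _ <= X]mxE lerDl.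
by rewrite -trmx_mul mulmx_tr_self_ge0.
Qed.

Lemma vnorm_orthproj_min m k (B : 'M[R]_(m, k)) (f : 'cV[R]_m) (a : 'cV[R]_k) :
  B^T *m B = 1%:M -> vnorm (f - B *m B^T *m f) <= vnorm (f - B *m a).
Proof.
move=> orthoB.
have -> : f - B *m a = (f - B *m B^T *m f) + B *m (B^T *m f - a).
  by rewrite mulmxBr mulmxA addrA subrK.
by apply: vnorm_le_addr_orth; rewrite mulmxBr !mulmxA orthoB mul1mx subrr.
Qed.

Lemma unique_lsq_mulmx_inj m n (A : 'M[R]_(m, n)) b alpha (v : 'cV[R]_n) :
  unique_lsq A b alpha -> A *m v = 0 -> v = 0.
Proof.
move=> [alpha_min alpha_uniq] Av0.
have alphav_min g : vnorm (A *m (alpha + v) - b) <= vnorm (A *m g - b).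
  by rewrite mulmxDr Av0 addr0 alpha_min.
by have := alpha_uniq _ alphav_min; rewrite -{2}[alpha]addr0 => /addrI.
Qed.

Lemma unique_lsq_leq m n (A : 'M[R]_(m, n)) b alpha :
  unique_lsq A b alpha -> (n <= m)%N.
Proof. by move=> lsq; apply: mulmx_inj_leq => v; apply: unique_lsq_mulmx_inj lsq. Qed.

End LeastSquares.

(* The extended-real library is imported only here: its classical_sets would
   shadow finset's set0 and subsetP in the statement of theorem2. *)
Module Spectral.
Import classical_sets constructive_ereal ereal.
Local Open Scope ring_scope.

Section BelowThreshold.
Set Implicit Arguments.
Variables (R : realType) (N : nat) (U : 'M[R]_N) (lam : 'I_N -> R).

Lemma colsubmx_orthonormal (K : {set 'I_N}) :
  U^T *m U = 1%:M -> (colsubmx U K)^T *m colsubmx U K = 1%:M.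
Proof.
move=> orthoU; apply/matrixP => k l; rewrite !mxE.
have := congr1 (fun M : 'M[R]_N => M (enum_val k) (enum_val l)) orthoU.
rewrite /= !mxE (inj_eq enum_val_inj) => <-.
by apply: eq_bigr => a _; rewrite !mxE.
Qed.

Lemma proj_below_colsubmx (K : {set 'I_N}) theta :
  (forall i, (lam i < theta) = (i \in K)) ->
  proj_below U lam theta = colsubmx U K *m (colsubmx U K)^T.
Proof.
move=> defK; apply/matrixP => a b; rewrite /proj_below summxE mxE.
rewrite (eq_bigl (mem K)) // big_enum_val; apply: eq_bigr => k _.
by rewrite mxE big_ord1 !mxE.
Qed.

Lemma smoothness_le delta f theta :
  vnorm (f - proj_below U lam theta *m f) <= delta ->
  (smoothness U lam delta f <= theta%:E)%E.
Proof. by move=> err; apply: ereal_inf_lbound; exists theta. Qed.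

Lemma num_below_le g theta :
  (g <= theta%:E)%E -> (num_below lam g <= #|[set i | (lam i < theta)%R]|)%N.
Proof.
move=> g_le; apply/subset_leq_card/fintype.subsetP => i; rewrite !inE => lt_g.
by rewrite -lte_fin (lt_le_trans lt_g).
Qed.

Lemma sublevel_argmin (c : \bar R) j :
  ~~ ((lam j)%:E < c)%E ->
  (forall k, ~~ ((lam k)%:E < c)%E -> lam j <= lam k) ->
  forall i, (lam i < lam j) = ((lam i)%:E < c)%E.
Proof.
move=> j_out j_min i; apply/idP/idP => [lt_ij|lt_ic].
  by apply: contraLR lt_ij => /j_min; rewrite -leNgt.
by rewrite -lte_fin (lt_le_trans lt_ic) // leNgt.
Qed.

Lemma num_below_smoothness_le (c : \bar R) delta f
    (alpha : 'cV[R]_#|[set i | ((lam i)%:E < c)%E]|) :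
  U^T *m U = 1%:M ->
  vnorm (f - colsubmx U [set i | ((lam i)%:E < c)%E] *m alpha) <= delta ->
  (num_below lam (smoothness U lam delta f)
     <= #|[set i | ((lam i)%:E < c)%E]|)%N.
Proof.
set K := [set i | _] => orthoU err.
have [K_full|] := boolP ([set: 'I_N] \subset K).
  have -> : K = [set: 'I_N] by apply/eqP; rewrite finset.eqEsubset finset.subsetT.
  by rewrite cardsT max_card.
case/subsetPn => j0 _ j0_out.
have [j j_out j_min] := @arg_minP _ _ _ j0 (fun k => k \notin K) lam j0_out.
have defK i : (lam i < lam j) = (i \in K).
  rewrite inE; apply: sublevel_argmin => [|k k_out]; first by rewrite inE in j_out.
  by apply: j_min; rewrite inE.
have -> : #|K| = #|[set i | lam i < lam j]| by apply: eq_card => i; rewrite inE defK.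
apply/num_below_le/smoothness_le; rewrite (proj_below_colsubmx _ defK).
exact: le_trans (vnorm_orthproj_min f alpha (colsubmx_orthonormal K orthoU)) err.
Qed.

End BelowThreshold.
End Spectral.

Theorem theorem2 (R : realType) (N : nat) (W : 'M[R]_N) (U : 'M[R]_N)
  (lam : 'I_N -> R) (f : 'cV[R]_N) (delta : R) :
  weighted_simple_connected W ->
  ortho_eigenbasis (normLap W) U lam ->
  0 < delta ->
  forall (S : {set 'I_N}) (alpha : 'cV[R]_#|Kset U lam S|),
    S != set0 ->
    unique_lsq (subU U S (Kset U lam S)) (restr f S) alpha ->
    vnorm (f - reconstr U lam S alpha) <= delta ->
    (num_below lam (smoothness U lam delta f) <= #|S|)%N.
Proof.
move=> _ [orthoU _ _] _ S alpha _ lsq err.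
apply: leq_trans (unique_lsq_leq lsq).
exact: Spectral.num_below_smoothness_le orthoU err.
Qed.
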